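(* Let $u\ge1$, $d\ge0$, $d'\ge0$ be integers. Let $T=\{T_1,\dots,T_l\}\in L(d+u,d)$ and $T'=\{T'_1,\dots,T'_l\}\in L(d'+u,d')$ satisfy $\operatorname{codim}_d(T_i)=\operatorname{codim}_{d'}(T'_i)$ for each $i$. Define $\bar\mu_{u,d}(T)=\mu_{d+u,d}(T)$. Then $\bar\mu_{u,d}(T)=\bar\mu_{u,d'}(T')$.
   Context: For a finite set $X$ let $\operatorname{codim}_d(X)=d+1-|X|$. For a finite collection $\{T_1,\dots,T_l\}$ of pairwise distinct finite sets put $\rho_d(\{T_1,\dots,T_l\})=\sum_{i=1}^l\operatorname{codim}_d(T_i)$ (with $\rho_d(\emptyset)=0$) and $D_d(\{T_1,\dots,T_l\})=\operatorname{codim}_d(T_1\cap\cdots\cap T_l)-\rho_d(\{T_1,\dots,T_l\})$. For integers $d\ge0$, $n>d$, $L(n,d)$ is the set of all collections $T$ of subsets of $\{1,\dots,n\}$ such that (i) $D_d(T')>0$ for every $T'\subset T$ with $|T'|>1$, and (ii) $0\le|T_i|\le d$ for every $T_i\in T$. It is partially ordered by: $T<T'$ iff $\rho_d(T)<\rho_d(T')$ and for every $T_i\in T$ there exists $T'_j\in T'$ with $T'_j\subset T_i$; $T\le T'$ means $T<T'$ or $T=T'$. The Möbius function $\mu_{n,d}$ of $L(n,d)$ is defined by $\mu_{n,d}(T,T)=1$ and $\sum_{S:\,T\le S\le T'}\mu_{n,d}(T,S)=0$ for $T<T'$; and $\mu_{n,d}(T):=\mu_{n,d}(\emptyset,T)$.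 *)

From mathcomp Require Import all_boot all_order all_algebra.
Set Implicit Arguments. Unset Strict Implicit. Unset Printing Implicit Defensive.
Import Order.TTheory GRing.Theory Num.Theory.
Local Open Scope ring_scope.

(* Subsets of {1,...,n} are represented as subsets of 'I_n = {0,...,n-1}. *)

Definition codim (d : nat) {n : nat} (X : {set 'I_n}) : int :=
  (d.+1)%:Z - (#|X|)%:Z.

Definition rho (d : nat) {n : nat} (T : {set {set 'I_n}}) : int :=
  \sum_(X in T) codim d X.

Definition bigI {n : nat} (T : {set {set 'I_n}}) : {set 'I_n} :=
  \bigcap_(X in T) X.

Definition Dd (d : nat) {n : nat} (T : {set {set 'I_n}}) : int :=
  codim d (bigI T) - rho d T.

Definition inL (n d : nat) (T : {set {set 'I_n}}) : bool :=
  [forall T' : {set {set 'I_n}},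
      ((T' \subset T) && (1 < #|T'|)%N) ==> (0 < Dd d T')]
  && [forall X in T, (#|X| <= d)%N].
Arguments inL : clear implicits.

Definition ltL (d : nat) {n : nat} (T T' : {set {set 'I_n}}) : bool :=
  (rho d T < rho d T') && [forall X in T, exists Y in T', Y \subset X].

Definition leL (d : nat) {n : nat} (T T' : {set {set 'I_n}}) : bool :=
  (T == T') || ltL d T T'.

(* Moebius function of L(n,d), computed by its defining recursion
   mu(T,T) = 1, mu(T,T') = - sum_{S in L, T <= S < T'} mu(T,S) for T < T',
   (and 0 if T is not <= T'), with a fuel argument. *)
Fixpoint mu_aux (n d : nat) (k : nat) (T T' : {set {set 'I_n}}) : int :=
  match k with
  | 0%N => 0
  | k'.+1 =>
      if T == T' then 1
      else if ltL d T T' then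
        - \sum_(S : {set {set 'I_n}} | inL n d S && leL d T S && ltL d S T')
            @mu_aux n d k' T S
      else 0
  end.

(* The fuel exceeds the length of any chain in the finite poset. *)
Definition mobius (n d : nat) (T T' : {set {set 'I_n}}) : int :=
  @mu_aux n d (#|{: {set {set 'I_n}}}|).+1 T T'.

Definition mu (n d : nat) (T : {set {set 'I_n}}) : int := @mobius n d set0 T.

Definition mubar (u d : nat) (T : {set {set 'I_(d + u)}}) : int :=
  @mu (d + u) d T.
Arguments mu_aux : clear implicits.
Arguments mobius : clear implicits.
Arguments mu : clear implicits.
Arguments mubar : clear implicits.

From mathcomp Require Import all_boot all_order all_algebra zify.
Set Implicit Arguments. Unset Strict Implicit. Unset Printing Implicit Defensive.
Import Order.TTheory GRing.Theory Num.Theory.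
Local Open Scope ring_scope.

(* The value mu(0, T) only depends on the interval [0, T] of L(n, d).  Two
   members T_i, T_j of T never lie in a common set of at most d points (by
   D(T_i, T_j) > 0 their union has more than d points), so each member Y of an
   element below T contains exactly one T_i.  Fix bijections tau_i from the
   complement of T'_i onto that of T_i; they exist since the codimensions agree
   and n - d = n' - d'.  The map Y |-> T'_i \cup tau_i^-1(Y) preserves codim,
   inclusion, and intersections of sets containing the same T_i.  As D is
   positive on a collection once it is positive on each group of members sharing
   a T_i, this gives an order embedding of [0, T] into [0, T'].  By symmetry the
   two intervals have the same size, so it is an isomorphism and the Moebius
   values agree. *)

Lemma rho_set0 d n : rho d (set0 : {set {set 'I_n}}) = 0.
Proof. by rewrite /rho big_set0. Qed.

Lemma ltL_trans d n (A B C : {set {set 'I_n}}) : ltL d A B -> ltL d B C -> ltL d A C.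
Proof.
case/andP=> rAB /forall_inP AB; case/andP=> rBC /forall_inP BC.
rewrite /ltL (lt_trans rAB rBC); apply/forall_inP=> X /AB/exists_inP[Y /BC].
by case/exists_inP=> Z ZC ZY YX; apply/exists_inP; exists Z; rewrite // (subset_trans ZY YX).
Qed.

Lemma inL_Dd_gt0 n d (S R : {set {set 'I_n}}) :
  inL n d S -> R \subset S -> (1 < #|R|)%N -> 0 < Dd d R.
Proof. by case/andP=> /forallP/(_ R) + _ RS R1; rewrite RS R1. Qed.

Lemma inL_card_le n d (S : {set {set 'I_n}}) X : inL n d S -> X \in S -> (#|X| <= d)%N.
Proof. by case/andP=> _ /forall_inP; apply. Qed.

Lemma rho_le_codim_bigI n d (R : {set {set 'I_n}}) : R != set0 ->
  ((1 < #|R|)%N -> 0 < Dd d R) -> rho d R <= codim d (bigI R).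
Proof.
move=> R0 DdR; case: (ltnP 1 #|R|) => [/DdR|R1]; first by rewrite subr_gt0 => /ltW.
have /cards1P[X ->] : #|R| == 1%N by rewrite eqn_leq R1 card_gt0.
by rewrite /rho /bigI !big_set1.
Qed.

Lemma inL_rho_le n d (S : {set {set 'I_n}}) : inL n d S -> rho d S <= (d.+1)%:Z.
Proof.
move=> LS; have [->|S0] := eqVneq S set0; first by rewrite rho_set0.
apply: le_trans (rho_le_codim_bigI S0 (inL_Dd_gt0 LS (subxx S))) _.
by rewrite /codim lerBlDr lerDl.
Qed.

(** * The Moebius recursion *)

(* Every recursive call lowers rho, so fuel beyond rho X is never exhausted. *)
Lemma mu_aux_fuel_add n d k j X :
  rho d X < k%:Z -> mu_aux n d (k + j) set0 X = mu_aux n d k set0 X.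
Proof.
elim: k X => [|k IH] X hX.
  case: j => [|j] //=; have X0 : set0 != X by apply: contraTneq hX => <-; rewrite rho_set0.
  by rewrite (negbTE X0) /ltL rho_set0 ltNge (ltW hX).
rewrite addSn /=; case: ifP => // _; case: ifP => // _.
congr (- _); apply: eq_bigr => S /andP[_ /andP[rS _]]; apply: IH.
by apply: lt_le_trans rS _; move: hX; lia.
Qed.

Lemma mu_aux_fuel_eq n d k1 k2 X : rho d X < k1%:Z -> rho d X < k2%:Z ->
  mu_aux n d k1 set0 X = mu_aux n d k2 set0 X.
Proof.
move=> h1 h2; case: (leqP k1 k2) => hk.
  by rewrite -(subnKC hk) mu_aux_fuel_add.
by rewrite -(subnKC (ltnW hk)) mu_aux_fuel_add.
Qed.

Lemma mobius_fuel n d k X : (d < n)%N -> (d.+1 < k)%N -> inL n d X ->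
  mobius n d set0 X = mu_aux n d k set0 X.
Proof.
move=> dn dk LX; have rX := inL_rho_le LX.
have n_le : (n <= #|{: {set {set 'I_n}}}|)%N.
  rewrite -[n in (n <= _)%N]card_ord; apply: (@leq_card _ _ (fun i => [set [set i]])).
  by move=> i j /set1_inj/set1_inj.
by apply: mu_aux_fuel_eq; move: rX; lia.
Qed.

Definition below n d (T : {set {set 'I_n}}) := [set S | inL n d S && leL d S T].
Arguments below : clear implicits.

Lemma below_inL n d T S : S \in below n d T -> inL n d S.
Proof. by rewrite inE => /andP[]. Qed.

Lemma below_ltL n d T (S X : {set {set 'I_n}}) :
  inL n d S -> ltL d S X -> X \in below n d T -> S \in below n d T.
Proof.
move=> LS SX; rewrite !inE LS /leL => /andP[_ /orP[/eqP <-|XT]]; first by rewrite SX orbT.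
by rewrite (ltL_trans SX XT) orbT.
Qed.

Lemma below_self n d T : inL n d T -> T \in below n d T.
Proof. by rewrite inE /leL eqxx andbT. Qed.

Lemma below_set0 n d T : inL n d T -> set0 \in below n d T.
Proof.
move=> LT; rewrite inE /leL; apply/andP; split.
  apply/andP; split; last by apply/forall_inP => X; rewrite inE.
  by apply/forallP => R; apply/implyP => /andP[]; rewrite subset0 => /eqP ->; rewrite cards0.
have [->//|/set0Pn[X XT]] := eqVneq T set0.
rewrite /= /ltL rho_set0; apply/andP; split; last by apply/forall_inP => Y; rewrite inE.
rewrite /rho (bigD1 X) //= ltr_pwDl //.
  by rewrite /codim subr_gt0 ltz_nat ltnS (inL_card_le LT XT).
by apply: sumr_ge0 => Y /andP[YT _]; rewrite /codim subr_ge0 lez_nat (leqW (inL_card_le LT YT)).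
Qed.

Lemma sum_below n d T X (F : {set {set 'I_n}} -> int) : X \in below n d T ->
  \sum_(S | inL n d S && leL d set0 S && ltL d S X) F S =
  \sum_(S in below n d T | leL d set0 S && ltL d S X) F S.
Proof.
move=> XT; apply: eq_bigl => S; rewrite -andbA; apply/andP/andP => [[LS SX]|[/below_inL->//]].
by split=> //; case/andP: SX => _ /below_ltL; apply.
Qed.

Section MoebiusTransfer.
Variables (n d n' d' : nat) (T : {set {set 'I_n}}) (T' : {set {set 'I_n'}}).
Variable phi : {set {set 'I_n}} -> {set {set 'I_n'}}.
Hypothesis LT : inL n d T.
Hypothesis phi_set0 : phi set0 = set0.
Hypothesis phi_inj : {in below n d T &, injective phi}.
Hypothesis phi_below : phi @: below n d T = below n' d' T'.
Hypothesis phi_ltL : {in below n d T &, forall A B, ltL d' (phi A) (phi B) = ltL d A B}.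

Lemma phi_leL_set0 S : S \in below n d T -> leL d' set0 (phi S) = leL d set0 S.
Proof.
have T0 := below_set0 LT; move=> ST.
by rewrite /leL -phi_set0 phi_ltL // (inj_in_eq phi_inj).
Qed.

Lemma mu_aux_transfer k X : X \in below n d T ->
  mu_aux n d k set0 X = mu_aux n' d' k set0 (phi X).
Proof.
have T0 := below_set0 LT.
elim: k X => [//|k IH] X XT /=.
have -> : (set0 == phi X) = (set0 == X) by rewrite -phi_set0 (inj_in_eq phi_inj).
have -> : ltL d' set0 (phi X) = ltL d set0 X by rewrite -phi_set0 phi_ltL.
case: ifP => // _; case: ifP => // _; congr (- _).
have phiXT : phi X \in below n' d' T' by rewrite -phi_below imset_f.
rewrite (sum_below _ XT) (sum_below _ phiXT) !big_mkcondr /= -phi_below.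
rewrite big_imset //=; apply: eq_bigr => S ST.
by rewrite phi_leL_set0 // phi_ltL // IH.
Qed.

Lemma mobius_transfer : (d < n)%N -> (d' < n')%N -> phi T = T' ->
  mobius n d set0 T = mobius n' d' set0 T'.
Proof.
move=> dn dn' phiT; have TT := below_self LT.
have LT' : inL n' d' T' by apply: (@below_inL _ _ T'); rewrite -phi_below -phiT imset_f.
rewrite (@mobius_fuel _ _ (d + d').+2) // ?(@mobius_fuel n' d' (d + d').+2) //; try lia.
by rewrite mu_aux_transfer // phiT.
Qed.

End MoebiusTransfer.

(** * A groupwise criterion for membership in L *)

Lemma card_bigcup_le (T I : finType) (P : pred I) (A : I -> {set T}) :
  (#|\bigcup_(i | P i) A i| <= \sum_(i | P i) #|A i|)%N.
Proof.
apply: (big_rec2 (fun (X : {set T}) k => #|X| <= k)%N); first by rewrite cards0.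
by move=> i X k _ Xk; apply: leq_trans (leq_card_setU _ _) _; apply: leq_add.
Qed.

Lemma card_bigcap_sub_le (T I : finType) (P : pred I) (A B : I -> {set T}) :
  (forall i, P i -> A i \subset B i) ->
  (#|\bigcap_(i | P i) B i| - #|\bigcap_(i | P i) A i| <= \sum_(i | P i) (#|B i| - #|A i|))%N.
Proof.
move=> AB; have capAB : \bigcap_(i | P i) A i \subset \bigcap_(i | P i) B i.
  by apply/bigcapsP => i Pi; apply: subset_trans (bigcap_inf _ Pi) (AB i Pi).
rewrite -cardsDS //.
apply: (@leq_trans #|\bigcup_(i | P i) (B i :\: A i)|).
  apply/subset_leq_card/subsetP => x; rewrite inE => /andP[xA /bigcapP xB].
  have : ~~ [forall i, P i ==> (x \in A i)].
    by apply: contra xA => /forallP xA; apply/bigcapP => i; apply/implyP.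
  rewrite negb_forall => /existsP[i]; rewrite negb_imply => /andP[Pi xAi].
  by apply/bigcupP; exists i; rewrite // inE xAi xB.
apply: leq_trans (card_bigcup_le _ _) _.
by apply/eq_leq/eq_bigr => i Pi; rewrite cardsDS ?AB.
Qed.

Lemma codim_bigcap_sub n d (J : finType) (I : {set J}) (A B : J -> {set 'I_n}) :
  (forall i, i \in I -> A i \subset B i) ->
  codim d (\bigcap_(i in I) A i) - \sum_(i in I) codim d (A i) <=
  codim d (\bigcap_(i in I) B i) - \sum_(i in I) codim d (B i).
Proof.
move=> AB; have capAB := card_bigcap_sub_le AB.
have capA_B : (#|\bigcap_(i in I) A i| <= #|\bigcap_(i in I) B i|)%N.
  by apply/subset_leq_card/bigcapsP => i iI; apply: subset_trans (bigcap_inf _ iI) (AB i iI).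
have codimB i : i \in I -> codim d (B i) = codim d (A i) - ((#|B i| - #|A i|)%N)%:Z.
  by move=> iI; rewrite /codim; have := subset_leq_card (AB i iI); lia.
have -> : \sum_(i in I) codim d (B i) =
    \sum_(i in I) codim d (A i) - (\sum_(i in I) (#|B i| - #|A i|))%N%:Z.
  by rewrite (eq_bigr _ codimB) sumrB (big_morph Posz PoszD erefl).
by move: capAB capA_B; rewrite /codim; lia.
Qed.

Section Grouping.
Variables (n : nat) (J : finType) (I : {set J}) (Q : J -> pred {set 'I_n}).
Variable R : {set {set 'I_n}}.
Hypothesis Q_ex : forall Y, Y \in R -> exists2 i, i \in I & Q i Y.
Hypothesis Q_uniq : forall Y i j, Y \in R -> Q i Y -> Q j Y -> i = j.

Lemma rho_partition d : rho d R = \sum_(i in I) rho d [set Y in R | Q i Y].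
Proof.
rewrite /rho; have -> : \sum_(i in I) \sum_(Y in [set Y in R | Q i Y]) codim d Y =
    \sum_(i in I) \sum_(Y in R) (if Q i Y then codim d Y else 0).
  by apply: eq_bigr => i _; rewrite -big_mkcondr; apply: eq_bigl => Y; rewrite inE.
rewrite exchange_big /=; apply: eq_bigr => Y YR.
have [i0 i0I Qi0] := Q_ex YR; rewrite (bigD1 i0) //= Qi0 big1 ?addr0 // => j /andP[_ ji0].
by case: ifP => // Qj; move: ji0; rewrite (Q_uniq YR Qj Qi0) eqxx.
Qed.

Lemma bigI_partition : bigI R = \bigcap_(i in I) bigI [set Y in R | Q i Y].
Proof.
apply/setP => x; apply/bigcapP/bigcapP => [xR i _|xI Y YR].
  by apply/bigcapP => Y; rewrite inE => /andP[/xR].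
by have [i iI QiY] := Q_ex YR; move/bigcapP: (xI i iI); apply; rewrite inE YR.
Qed.

End Grouping.

Lemma inL_card_setU_gt n d (S : {set {set 'I_n}}) X Y : inL n d S ->
  X \in S -> Y \in S -> X != Y -> (d < #|X :|: Y|)%N.
Proof.
move=> LS XS YS XY; have XYS : [set X; Y] \subset S by apply/subsetP => Z /set2P[]->.
have := inL_Dd_gt0 LS XYS; rewrite cards2 XY /Dd => /(_ isT).
have -> : bigI [set X; Y] = X :&: Y by rewrite /bigI bigcap_setU !big_set1.
have -> : rho d [set X; Y] = codim d X + codim d Y by rewrite /rho big_setU1 ?inE //= big_set1.
by rewrite /codim; have := cardsUI X Y; lia.
Qed.

Definition admissible n d l (f : 'I_l -> {set 'I_n}) (Y : {set 'I_n}) :=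
  (#|Y| <= d)%N && [exists i, f i \subset Y].

Section Generators.
Variables (n d l : nat) (f : 'I_l -> {set 'I_n}).
Hypothesis f_inj : injective f.
Hypothesis LT : inL n d (f @: setT).

Lemma card_gen_le i : (#|f i| <= d)%N.
Proof. exact/(inL_card_le LT)/imset_f. Qed.

Lemma gen_index_unique (Y : {set 'I_n}) i j :
  (#|Y| <= d)%N -> f i \subset Y -> f j \subset Y -> i = j.
Proof.
move=> Yd fiY fjY; apply: f_inj; apply/eqP; apply: contraTT Yd => fij; rewrite -ltnNge.
have fT k : f k \in f @: setT by rewrite imset_f.
apply: leq_trans (inL_card_setU_gt LT (fT i) (fT j) fij) _.
by rewrite subset_leq_card // subUset fiY fjY.
Qed.

Lemma Dd_gens_gt0 (I : {set 'I_l}) : (1 < #|I|)%N ->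
  0 < codim d (\bigcap_(i in I) f i) - \sum_(i in I) codim d (f i).
Proof.
have f_injI : {in I &, injective f} by move=> ? ? _ _ /f_inj.
move=> I1; have := inL_Dd_gt0 LT (imsetS f (subsetT I)).
by rewrite card_in_imset // I1 /Dd /bigI /rho !big_imset //; apply.
Qed.

Lemma inL_groupwise (S : {set {set 'I_n}}) :
  (forall Y, Y \in S -> admissible d f Y) ->
  (forall (R : {set {set 'I_n}}) i, R \subset S -> (1 < #|R|)%N ->
     (forall Y, Y \in R -> f i \subset Y) -> 0 < Dd d R) ->
  inL n d S.
Proof.
move=> Sadm DdS; apply/andP; split; last by apply/forall_inP => Y /Sadm/andP[].
apply/forallP => R; apply/implyP => /andP[RS R1].
have [/existsP[i /forall_inP fiR]|spread] := boolP [exists i, [forall Y in R, f i \subset Y]].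
  exact: DdS RS R1 fiR.
have Radm Y : Y \in R -> admissible d f Y by move/(subsetP RS)/Sadm.
pose I := [set i | [exists Y in R, f i \subset Y]].
pose Rg i := [set Y in R | f i \subset Y].
have Rg_ex Y : Y \in R -> exists2 i, i \in I & f i \subset Y.
  move=> YR; case/andP: (Radm Y YR) => _ /existsP[i fiY].
  by exists i; rewrite // inE; apply/exists_inP; exists Y.
have Rg_uniq Y i j : Y \in R -> f i \subset Y -> f j \subset Y -> i = j.
  by case/Radm/andP => Yd _; apply: gen_index_unique.
have I1 : (1 < #|I|)%N.
  have [Y0 Y0R] : exists Y0, Y0 \in R by apply/set0Pn; rewrite -card_gt0 ltnW.
  have [i0 i0I fi0Y0] := Rg_ex Y0 Y0R.
  have : ~~ [forall Y in R, f i0 \subset Y] by apply: contra spread => ?; apply/existsP; exists i0.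
  rewrite negb_forall_in => /exists_inP[Y1 Y1R fi0Y1].
  have [i1 i1I fi1Y1] := Rg_ex Y1 Y1R.
  have i01 : i0 != i1 by apply: contraNneq fi0Y1 => ->.
  by rewrite (cardsD1 i0) i0I (cardsD1 i1) in_setD1 i1I eq_sym i01.
have rho_Rg i : i \in I -> rho d (Rg i) <= codim d (bigI (Rg i)).
  rewrite inE => /exists_inP[Y YR fiY]; apply: rho_le_codim_bigI.
    by apply/set0Pn; exists Y; rewrite inE YR.
  move=> Rg1; apply: (DdS _ i _ Rg1) => [|Z]; last by rewrite inE => /andP[].
  by apply/subsetP => Z; rewrite inE => /andP[/(subsetP RS)].
have f_Rg i : i \in I -> f i \subset bigI (Rg i).
  by move=> _; apply/bigcapsP => Y; rewrite inE => /andP[].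
(* Each group's rho is at most the codim of its intersection, and enlarging the
   generators to these intersections can only increase D, which is positive on
   the generators themselves. *)
rewrite /Dd (bigI_partition (Q := fun i Y => f i \subset Y) Rg_ex).
rewrite (rho_partition (Q := fun i Y => f i \subset Y) Rg_ex Rg_uniq).
apply: lt_le_trans (Dd_gens_gt0 I1) _; apply: le_trans (codim_bigcap_sub d f_Rg) _.
by rewrite lerD2l lerN2; apply: ler_sum.
Qed.

End Generators.

(** * Rebasing the members of a collection *)

(* [x0] is only the default of [nth]; it is never returned on [B] when [#|A| = #|B|]. *)
Definition set_bij (T1 T2 : finType) (x0 : T1) (A : {set T1}) (B : {set T2}) (y : T2) :=
  nth x0 (enum A) (index y (enum B)).

Lemma set_bijP (T1 T2 : finType) (x0 : T1) (A : {set T1}) (B : {set T2}) :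
  #|A| = #|B| -> {in B &, injective (set_bij x0 A B)} /\ set_bij x0 A B @: B = A.
Proof.
move=> AB; have idx y : y \in B -> (index y (enum B) < size (enum A))%N.
  by move=> yB; rewrite -cardE AB cardE index_mem mem_enum.
have inj : {in B &, injective (set_bij x0 A B)}.
  move=> y1 y2 y1B y2B /eqP; rewrite /set_bij nth_uniq ?idx ?enum_uniq // => /eqP e.
  have y1B' : y1 \in enum B by rewrite mem_enum.
  by rewrite -(nth_index y1 y1B') e nth_index ?mem_enum.
split=> //; apply/eqP; rewrite eqEcard card_in_imset // AB leqnn andbT.
by apply/subsetP => x /imsetP[y yB ->]; rewrite -mem_enum mem_nth ?idx.
Qed.

Section Rebase.
Variables (n d n' d' l : nat) (f : 'I_l -> {set 'I_n}) (g : 'I_l -> {set 'I_n'}).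
Hypothesis f_inj : injective f.
Hypothesis g_inj : injective g.
Hypothesis LT : inL n d (f @: setT).
Hypothesis LT' : inL n' d' (g @: setT).
Variable x0 : 'I_n.
Hypothesis dim_eq : (n + d' = n' + d)%N.
Hypothesis codim_gen : forall i, codim d (f i) = codim d' (g i).
Implicit Types (Y : {set 'I_n}) (S : {set {set 'I_n}}).

Lemma card_setC_gen i : #|~: f i| = #|~: g i|.
Proof.
have := cardsC (f i); have := cardsC (g i); rewrite !card_ord.
have := codim_gen i; rewrite /codim.
by have := card_gen_le LT i; have := card_gen_le LT' i; lia.
Qed.

Definition tau i := set_bij x0 (~: f i) (~: g i).

Lemma tau_notin i y : y \notin g i -> tau i y \notin f i.
Proof.
have [_ im] := set_bijP x0 (card_setC_gen i).
by move=> yg; rewrite -in_setC -im imset_f ?inE.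
Qed.

Lemma tau_inj i : {in ~: g i &, injective (tau i)}.
Proof. by have [] := set_bijP x0 (card_setC_gen i). Qed.

Lemma tau_onto i x : x \notin f i -> exists2 y, y \notin g i & tau i y = x.
Proof.
have [_ im] := set_bijP x0 (card_setC_gen i).
by rewrite -in_setC -im => /imsetP[y]; rewrite inE => yg ->; exists y.
Qed.

Definition rebase_at i Y : {set 'I_n'} := [set y | (y \in g i) || (tau i y \in Y)].

Lemma rebase_at_sup i Y : g i \subset rebase_at i Y.
Proof. by apply/subsetP => y yg; rewrite inE yg. Qed.

Lemma rebase_at_gen i : rebase_at i (f i) = g i.
Proof.
apply/setP => y; rewrite inE; case: (boolP (y \in g i)) => //= yg.
exact/negbTE/tau_notin.
Qed.

Lemma card_rebase_at i Y : f i \subset Y -> #|rebase_at i Y| = (#|g i| + #|Y :\: f i|)%N.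
Proof.
move=> fY; pose W := [set y in ~: g i | tau i y \in Y].
have -> : rebase_at i Y = g i :|: W by apply/setP => y; rewrite !inE; case: (y \in g i).
have tauW : tau i @: W = Y :\: f i.
  apply/setP => x; apply/imsetP/idP => [[y]|].
    by rewrite !inE => /andP[yg yY] ->; rewrite yY andbT tau_notin.
  rewrite inE => /andP[xf xY]; have [y yg tau_y] := tau_onto xf.
  by exists y; rewrite // !inE yg tau_y xY.
have -> : #|Y :\: f i| = #|W|.
  rewrite -tauW card_in_imset // => y1 y2; rewrite !inE => /andP[y1g _] /andP[y2g _].
  by apply: tau_inj; rewrite inE.
rewrite cardsU (_ : g i :&: W = set0) ?cards0 ?subn0 //.
by apply/setP => y; rewrite !inE; case: (y \in g i).
Qed.

Lemma codim_rebase_at i Y : f i \subset Y -> codim d' (rebase_at i Y) = codim d Y.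
Proof.
move=> fY; have := codim_gen i; rewrite /codim card_rebase_at // cardsDS //.
by have := subset_leq_card fY; lia.
Qed.

Lemma rebase_at_subset i Y1 Y2 : f i \subset Y1 -> f i \subset Y2 ->
  (rebase_at i Y1 \subset rebase_at i Y2) = (Y1 \subset Y2).
Proof.
move=> fY1 fY2; apply/subsetP/subsetP => sub x.
  move=> xY1; have [xf|xf] := boolP (x \in f i); first exact: (subsetP fY2).
  have [y yg tau_y] := tau_onto xf.
  have : y \in rebase_at i Y2 by apply: sub; rewrite inE tau_y xY1 orbT.
  by rewrite inE (negbTE yg) tau_y.
by rewrite !inE => /orP[->//|/sub ->]; rewrite orbT.
Qed.

Lemma bigcap_rebase_at i (R : {set {set 'I_n}}) : R != set0 ->
  \bigcap_(Y in R) rebase_at i Y = rebase_at i (bigI R).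
Proof.
case/set0Pn => Y0 Y0R; apply/setP => y; rewrite inE.
apply/bigcapP/orP => [yR|[yg Y _|/bigcapP yR Y YR]]; rewrite ?inE ?yg ?yR ?orbT //.
have [yg|yg] := boolP (y \in g i); [by left | right].
by apply/bigcapP => Y /yR; rewrite inE (negbTE yg).
Qed.

Definition rebase Y : {set 'I_n'} :=
  if [pick i | f i \subset Y] is Some i then rebase_at i Y else set0.

Lemma rebaseE Y i : admissible d f Y -> f i \subset Y -> rebase Y = rebase_at i Y.
Proof.
case/andP=> Yd _ fY; rewrite /rebase; case: pickP => [j fjY|/(_ i)]; last by rewrite fY.
by rewrite (gen_index_unique f_inj LT Yd fjY fY).
Qed.

Lemma rebase_admissible Y i : admissible d f Y -> f i \subset Y ->
  [/\ admissible d' g (rebase Y), g i \subset rebase Y & codim d' (rebase Y) = codim d Y].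
Proof.
move=> adm fY; rewrite (rebaseE adm fY) rebase_at_sup codim_rebase_at //; split=> //.
apply/andP; split; last by apply/existsP; exists i; rewrite rebase_at_sup.
by have := codim_rebase_at fY; case/andP: adm; rewrite /codim; lia.
Qed.

Lemma admissible_gen Y : admissible d f Y -> exists i, f i \subset Y.
Proof. by case/andP=> _ /existsP. Qed.

Lemma rebase_subset Y1 Y2 : admissible d f Y1 -> admissible d f Y2 ->
  (rebase Y1 \subset rebase Y2) = (Y1 \subset Y2).
Proof.
move=> adm1 adm2; have [i1 fY1] := admissible_gen adm1; have [i2 fY2] := admissible_gen adm2.
have [adm2' gY2 _] := rebase_admissible adm2 fY2; have [_ gY1 _] := rebase_admissible adm1 fY1.
apply/idP/idP => sub.
  have e : i1 = i2.
    by case/andP: adm2' => Yd _; apply: (gen_index_unique g_inj LT' Yd (subset_trans gY1 sub) gY2).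
  by move: sub; rewrite (rebaseE adm1 fY1) (rebaseE adm2 fY2) e rebase_at_subset // -e.
have e : i1 = i2.
  by case/andP: adm2 => Yd _; apply: (gen_index_unique f_inj LT Yd (subset_trans fY1 sub) fY2).
by rewrite (rebaseE adm1 fY1) (rebaseE adm2 fY2) e rebase_at_subset // -e.
Qed.

Lemma rebase_inj : {in admissible d f &, injective rebase}.
Proof. by move=> Y1 Y2 adm1 adm2 e; apply/eqP; rewrite eqEsubset -!rebase_subset // e !subxx. Qed.

Local Notation adm := (admissible d f).
Local Notation adm' := (admissible d' g).
Local Notation T := (f @: setT).
Local Notation T' := (g @: setT).

Lemma rho_rebase S : {subset S <= adm} -> rho d' (rebase @: S) = rho d S.
Proof.
move=> Sadm; rewrite /rho big_imset; last by move=> ? ? /Sadm ? /Sadm; apply: rebase_inj.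
apply: eq_bigr => Y /Sadm admY; have [i fY] := admissible_gen admY.
by have [_ _ ->] := rebase_admissible admY fY.
Qed.

Lemma rebase_imset_admissible S : {subset S <= adm} -> {subset rebase @: S <= adm'}.
Proof.
move=> Sadm _ /imsetP[Y /Sadm admY ->]; have [i fY] := admissible_gen admY.
by have [] := rebase_admissible admY fY.
Qed.

Lemma rebase_imset_refines S1 S2 : {subset S1 <= adm} -> {subset S2 <= adm} ->
  [forall X in rebase @: S1, exists Y in rebase @: S2, Y \subset X] =
  [forall X in S1, exists Y in S2, Y \subset X].
Proof.
move=> adm1 adm2; apply/forall_inP/forall_inP => refines X XS.
  have /exists_inP[_ /imsetP[Y YS ->]] := refines _ (imset_f rebase XS).
  by rewrite (rebase_subset (adm2 _ YS) (adm1 _ XS)) => YX; apply/exists_inP; exists Y.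
case/imsetP: XS => {}X XS ->; have /exists_inP[Y YS YX] := refines X XS.
by apply/exists_inP; exists (rebase Y); rewrite ?imset_f // (rebase_subset (adm2 _ YS) (adm1 _ XS)).
Qed.

Lemma ltL_rebase S1 S2 : {subset S1 <= adm} -> {subset S2 <= adm} ->
  ltL d' (rebase @: S1) (rebase @: S2) = ltL d S1 S2.
Proof. by move=> adm1 adm2; rewrite /ltL !rho_rebase // rebase_imset_refines. Qed.

Lemma rebase_imset_inj S1 S2 : {subset S1 <= adm} -> {subset S2 <= adm} ->
  rebase @: S1 = rebase @: S2 -> S1 = S2.
Proof.
suff sub S S' : {subset S <= adm} -> {subset S' <= adm} -> rebase @: S = rebase @: S' -> S \subset S'.
  by move=> adm1 adm2 e; apply/eqP; rewrite eqEsubset !sub.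
move=> admS admS' e; apply/subsetP => Y YS.
have /imsetP[Y' Y'S /rebase_inj eY] : rebase Y \in rebase @: S' by rewrite -e imset_f.
by rewrite eY ?(admS _ YS) ?(admS' _ Y'S).
Qed.

Lemma rebase_imset_inL S : inL n d S -> {subset S <= adm} -> inL n' d' (rebase @: S).
Proof.
move=> LS Sadm; apply: (inL_groupwise g_inj LT' (rebase_imset_admissible Sadm)).
move=> R' i R'S R'1 gR'.
pose R := [set Y in S | rebase Y \in R'].
have RS : R \subset S by apply/subsetP => Y; rewrite inE => /andP[].
have Radm : {subset R <= adm} by move=> Y /(subsetP RS) /Sadm.
have imR : rebase @: R = R'.
  apply/setP => Y'; apply/imsetP/idP => [[Y]|Y'R]; first by rewrite inE => /andP[_ ?] ->.
  have /imsetP[Y YS eY] := subsetP R'S _ Y'R; exists Y => //.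
  by rewrite inE YS -eY.
have fR Y : Y \in R -> f i \subset Y.
  move=> YR; have admY := Radm Y YR; have [j fY] := admissible_gen admY.
  have [/andP[Yd _] gY _] := rebase_admissible admY fY.
  have giY : g i \subset rebase Y by apply: gR'; rewrite -imR imset_f.
  by rewrite (gen_index_unique g_inj LT' Yd giY gY).
have cardR : #|R| = #|R'|.
  by rewrite -imR card_in_imset // => ? ? /Radm ? /Radm ?; apply: rebase_inj.
have R0 : R != set0 by rewrite -card_gt0 cardR ltnW.
have := inL_Dd_gt0 LS RS; rewrite cardR => /(_ R'1); rewrite -imR.
rewrite /Dd rho_rebase //; suff -> : bigI (rebase @: R) = rebase_at i (bigI R).
  by rewrite codim_rebase_at //; apply/bigcapsP => Y /fR.
rewrite -bigcap_rebase_at // /bigI big_imset /=; last by move=> ? ? /Radm ? /Radm ?; apply: rebase_inj.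
by apply: eq_bigr => Y YR; apply: rebaseE; [apply: Radm | apply: fR].
Qed.

Lemma rebase_gens : rebase @: T = T'.
Proof.
rewrite -imset_comp; apply: eq_imset => i /=.
have admf : adm (f i) by rewrite /admissible card_gen_le //; apply/existsP; exists i.
by rewrite (rebaseE admf (subxx _)) rebase_at_gen.
Qed.

Lemma below_admissible S : S \in below n d T -> {subset S <= adm}.
Proof.
rewrite inE => /andP[LS TS] Y YS; rewrite unfold_in /admissible (inL_card_le LS YS) /=.
case/orP: TS => [/eqP eS|/andP[_ /forall_inP /(_ Y YS) /exists_inP[_ /imsetP[i _ ->] fY]]].
  by move: YS; rewrite eS => /imsetP[i _ ->]; apply/existsP; exists i.
by apply/existsP; exists i.
Qed.

Lemma rebase_below S : S \in below n d T -> rebase @: S \in below n' d' T'.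
Proof.
move=> ST; have Sadm := below_admissible ST; have Tadm := below_admissible (below_self LT).
have eqT : (rebase @: S == rebase @: T) = (S == T).
  by apply/eqP/eqP => [/(rebase_imset_inj Sadm Tadm)|->].
move: (ST); rewrite !inE => /andP[LS]; rewrite rebase_imset_inL //= /leL -rebase_gens.
by rewrite ltL_rebase // eqT.
Qed.

Lemma rebase_imset_below_inj : {in below n d T &, injective (fun S => rebase @: S)}.
Proof. by move=> S1 S2 /below_admissible adm1 /below_admissible adm2; apply: rebase_imset_inj. Qed.

Lemma card_below_le : (#|below n d T| <= #|below n' d' T'|)%N.
Proof.
rewrite -(card_in_imset rebase_imset_below_inj); apply/subset_leq_card/subsetP.
by move=> _ /imsetP[S ST ->]; apply: rebase_below.
Qed.

Lemma mobius_rebase : (#|below n' d' T'| <= #|below n d T|)%N -> (d < n)%N -> (d' < n')%N ->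
  mobius n d set0 T = mobius n' d' set0 T'.
Proof.
move=> card_ge dn dn'; apply: (mobius_transfer (phi := fun S => rebase @: S)) => //.
- exact: imset0.
- exact: rebase_imset_below_inj.
- apply/eqP; rewrite eqEcard card_in_imset ?card_ge ?andbT; last exact: rebase_imset_below_inj.
  by apply/subsetP => _ /imsetP[S ST ->]; apply: rebase_below.
- by move=> S1 S2 /below_admissible adm1 /below_admissible adm2; apply: ltL_rebase.
- exact: rebase_gens.
Qed.

End Rebase.

Theorem corollary4p3 (u d d' l : nat) (hu : (1 <= u)%N)
  (f : 'I_l -> {set 'I_(d + u)}) (g : 'I_l -> {set 'I_(d' + u)})
  (hf : injective f) (hg : injective g)
  (hT : inL (d + u) d (f @: [set: 'I_l]))
  (hT' : inL (d' + u) d' (g @: [set: 'I_l]))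
  (hcod : forall i : 'I_l, codim d (f i) = codim d' (g i)) :
  mubar u d (f @: [set: 'I_l]) = mubar u d' (g @: [set: 'I_l]).
Proof.
have x0 : 'I_(d + u) := Ordinal (ltn_addl d hu).
have x0' : 'I_(d' + u) := Ordinal (ltn_addl d' hu).
have hcod' i : codim d' (g i) = codim d (f i) by rewrite hcod.
have dim_eq : (d + u + d' = d' + u + d)%N by lia.
have card_ge := card_below_le hg hf hT' hT x0' (esym dim_eq) hcod'.
by apply: (mobius_rebase hf hg hT hT' x0 dim_eq hcod card_ge); lia.
Qed.
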